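(* Let $\Delta$ be a finite, flag, simply connected simplicial complex, with $\mathcal{P}_H$, $L$ and $\Phi_n$ as in the context. Let $e\cdot f\cdot g$ be a combinatorial 1-cycle in $\Delta$. Then for every $n\in\mathbb{Z}$, $\mathrm{Area}_{\mathcal{P}_H}\big(\Phi_n(efg)\big)\le 3|n|^2+(3L+6)|n|+3$.
   Context: $\mathrm{Edge}(\Delta)$ is the set of directed edges of $\Delta$; for $e$ in it, $\iota e$, $\tau e$ are its initial and terminal vertices and $\overline{e}$ is the reversed edge. $e_1\cdot\ldots\cdot e_l$ is a combinatorial path if $\tau e_i=\iota e_{i+1}$, and a combinatorial 1-cycle if also $\tau e_l=\iota e_1$. $\mathcal{P}_H=\langle\mathrm{Edge}(\Delta)\mid\mathcal{R}_H\rangle$ where $\mathcal{R}_H$ consists of the words $e\overline{e}$ ($e\in\mathrm{Edge}(\Delta)$) and $efg$, $e^{-1}f^{-1}g^{-1}$ for every combinatorial 1-cycle $e\cdot f\cdot g$. $\mathrm{Area}_{\mathcal{P}_H}(w)$ is the least $m$ such that $w$ is freely equal to $\prod_{i=1}^m x_ir_ix_i^{-1}$ with $r_i\in\mathcal{R}_H^{\pm1}$. For a letter $e$ and $m\in\mathbb{Z}$, $e^m$ is the word of $m$ copies of $e$ if $m\ge0$ and $|m|$ copies of $e^{-1}$ if $m<0$. Fix a vertex $q$ and a spanning tree $T$ of the 1-skeleton of $\Delta$; $p_n(u,v)=e_1^n\cdots e_l^n$ where $e_1\cdot\ldots\cdot e_l$ is the unique geodesic combinatorial path in $T$ from $u$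 to $v$. $L$ is the maximum over vertices $u,v$ of their edge-path distance in $T$. $\Phi_n$ ($n\in\mathbb{Z}$) is the endomorphism of the free monoid on $\mathrm{Edge}(\Delta)^{\pm1}$ with $\Phi_n(e)=p_n(q,\iota e)\,e^{n+1}\,p_n(\tau e,q)$ and $\Phi_n(e^{-1})=\Phi_n(e)^{-1}$ (formal inverse word). *)

From mathcomp Require Import all_boot all_order all_algebra.
From Stdlib Require Import Relations.
Set Implicit Arguments. Unset Strict Implicit. Unset Printing Implicit Defensive.

Section Complex.
Variable V : finType.

Definition is_simplicial_complex (F : {set {set V}}) : Prop :=
  (forall A B : {set V}, A \in F -> B \subset A -> B != set0 -> B \in F)
  /\ (forall v : V, [set v] \in F)
  /\ set0 \notin F.

Definition adj (F : {set {set V}}) (u v : V) : bool :=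
  (u != v) && ([set u; v] \in F).

Definition is_flag (F : {set {set V}}) : Prop :=
  forall A : {set V}, A != set0 ->
    (forall u v, u \in A -> v \in A -> u != v -> [set u; v] \in F) -> A \in F.

Inductive ep_step (F : {set {set V}}) : seq V -> seq V -> Prop :=
| ep_backtrack s1 s2 u v : adj F u v ->
    ep_step F (s1 ++ [:: u; v; u] ++ s2) (s1 ++ [:: u] ++ s2)
| ep_triangle s1 s2 u v w : u != v -> v != w -> u != w ->
    [set u; v; w] \in F ->
    ep_step F (s1 ++ [:: u; v; w] ++ s2) (s1 ++ [:: u; w] ++ s2).

Definition ep_equiv (F : {set {set V}}) := clos_refl_sym_trans _ (ep_step F).

(** Simply connected (combinatorially: connected 1-skeleton and trivial
    edge-path group, which is isomorphic to pi_1 of the realization). *)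
Definition simply_connected (F : {set {set V}}) : Prop :=
  (forall u v : V, exists s, path (adj F) u s /\ last u s = v)
  /\ (forall (v : V) (s : seq V), path (adj F) v s -> last v s = v ->
        ep_equiv F (v :: s) [:: v]).

Definition spanning_tree (F : {set {set V}}) (T : rel V) : Prop :=
  (forall u v, T u v = T v u) /\ (forall u v, T u v -> adj F u v) /\
  (forall u v : V, exists! s : seq V,
      path T u s /\ last u s = v /\ uniq (u :: s)).

(** gp u v is a geodesic T-path from u to v (listed as the vertices after u). *)
Definition geodesic_paths (T : rel V) (gp : V -> V -> seq V) : Prop :=
  forall u v, path T u (gp u v) /\ last u (gp u v) = v /\
    (forall s, path T u s -> last u s = v -> size (gp u v) <= size s).

Definition treeL (gp : V -> V -> seq V) : nat :=
  \max_(u : V) \max_(v : V) size (gp u v).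

(** Words: a letter is a directed edge (pair of vertices) with a sign
    (true = e, false = e^{-1}). *)
Definition letter := ((V * V) * bool)%type.
Definition word := seq letter.

Definition linv (x : letter) : letter := (x.1, ~~ x.2).
Definition winv (w : word) : word := rev (map linv w).

Definition edge_word (F : {set {set V}}) (w : word) : bool :=
  all (fun x : letter => adj F x.1.1 x.1.2) w.

Definition lpow (e : V * V) (m : int) : word :=
  match m with
  | Posz k => nseq k (e, true)
  | Negz k => nseq k.+1 (e, false)
  end.

Inductive free_step : word -> word -> Prop :=
| fs_cancel w1 w2 x : free_step (w1 ++ [:: x; linv x] ++ w2) (w1 ++ w2).
Definition freely_equal := clos_refl_sym_trans _ free_step.

Definition reverse_edge (e : V * V) : V * V := (e.2, e.1).

Definition comb_1cycle3 (F : {set {set V}}) (e f g : V * V) : Prop :=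
  [/\ adj F e.1 e.2, adj F f.1 f.2 & adj F g.1 g.2] /\
  [/\ e.2 = f.1, f.2 = g.1 & g.2 = e.1].

Definition relator (F : {set {set V}}) (r : word) : Prop :=
  (exists e : V * V, adj F e.1 e.2 /\
      r = [:: (e, true); (reverse_edge e, true)])
  \/ (exists e f g : V * V, comb_1cycle3 F e f g /\
      (r = [:: (e, true); (f, true); (g, true)] \/
       r = [:: (e, false); (f, false); (g, false)])).

Definition relator_pm (F : {set {set V}}) (r : word) : Prop :=
  relator F r \/ relator F (winv r).

Definition product_of_conjugates (F : {set {set V}}) (w : word) (m : nat) : Prop :=
  exists xs : seq (word * word),
    size xs = m /\
    (forall p, p \in xs -> edge_word F p.1 /\ relator_pm F p.2) /\
    freely_equal w (flatten [seq p.1 ++ p.2 ++ winv p.1 | p <- xs]).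

(** Area_{P_H}(w) <= B  (Area = least such m). *)
Definition Area_le (F : {set {set V}}) (w : word) (B : nat) : Prop :=
  exists m, m <= B /\ product_of_conjugates F w m.

Definition pn (gp : V -> V -> seq V) (n : int) (u v : V) : word :=
  flatten [seq lpow x n | x <- zip (u :: gp u v) (gp u v)].

Definition Phi_edge (gp : V -> V -> seq V) (q : V) (n : int) (e : V * V) : word :=
  pn gp n q e.1 ++ lpow e (n + 1)%R ++ pn gp n e.2 q.

Definition Phi_letter gp q n (x : letter) : word :=
  if x.2 then Phi_edge gp q n x.1 else winv (Phi_edge gp q n x.1).

Definition Phi gp q n (w : word) : word := flatten (map (Phi_letter gp q n) w).

End Complex.

(** Each triangle relator lets two letters of a 1-cycle [e f g] commute at the
    cost of two relators, so [e^k f^k g^k], with [k = |n+1|], is filled by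
    [k^2 + 2k] relators (bubble [e] through [f^k] and induct).  In [Phi_n(efg)] the three edge powers
    are separated by tree words [p_n(x,q) p_n(q,x)], and a tree path is reversed
    letter by letter by backtracking relators [e ebar], at most [L |n|] of them
    per pair; the outer pair [p_n(q,a) ... p_n(a,q)] is cancelled the same way. *)

From mathcomp Require Import all_boot all_order all_algebra.
From Stdlib Require Import Relations.
From mathcomp Require Import zify.
Set Implicit Arguments. Unset Strict Implicit. Unset Printing Implicit Defensive.

Lemma nseqSr (T : Type) k (a : T) : nseq k.+1 a = nseq k a ++ [:: a].
Proof. by rewrite -addn1 nseqD. Qed.

Section Words.
Variable V : finType.

Lemma linvK (x : letter V) : linv (linv x) = x.
Proof. by case: x => a b; rewrite /linv /= negbK. Qed.

Lemma winvK (w : word V) : winv (winv w) = w.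
Proof.
rewrite /winv map_rev revK -map_comp.
by rewrite (eq_map (g := id)) ?map_id // => x /=; rewrite linvK.
Qed.

Lemma winv_cons (x : letter V) (w : word V) : winv (x :: w) = winv w ++ [:: linv x].
Proof. by rewrite /winv /= rev_cons cats1. Qed.

Lemma freely_equal_catl (c a b : word V) :
  freely_equal a b -> freely_equal (c ++ a) (c ++ b).
Proof.
elim=> {a b} [a b [w1 w2 x]|a|a b _ IH|a b d _ IH1 _ IH2].
- by apply: rst_step; have := fs_cancel (c ++ w1) w2 x; rewrite -!catA.
- exact: rst_refl.
- exact: rst_sym.
- exact: rst_trans IH2.
Qed.

Lemma freely_equal_winvKl (u z : word V) : freely_equal (winv u ++ u ++ z) z.
Proof.
elim: u => [|x u IH] /=; first exact: rst_refl.
rewrite winv_cons -catA; apply: rst_trans IH; apply: rst_step.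
by have := fs_cancel (winv u) (u ++ z) (linv x); rewrite linvK.
Qed.

Lemma freely_equal_inverse_letter (a : word V) (x : letter V) (X : word V) :
  freely_equal (a ++ X) (a ++ x :: linv x :: X).
Proof. exact/rst_sym/rst_step/fs_cancel. Qed.

Lemma lpowE (x : V * V) (m : int) : lpow x m = nseq `|m|%N (x, (0 <= m)%R).
Proof. by case: m. Qed.

End Words.

Section Area.
Variables (V : finType) (F : {set {set V}}).

Lemma relator_pm_winv (r : word V) : relator_pm F r -> relator_pm F (winv r).
Proof. by rewrite /relator_pm winvK => -[]; [right|left]. Qed.

Lemma edge_word_cat (a b : word V) :
  edge_word F (a ++ b) = edge_word F a && edge_word F b.
Proof. by rewrite /edge_word all_cat. Qed.

Lemma edge_word_nseq k (a : letter V) : adj F a.1.1 a.1.2 -> edge_word F (nseq k a).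
Proof. by move=> H; rewrite /edge_word all_nseq H orbT. Qed.

Lemma edge_word_lpow (x : V * V) m : adj F x.1 x.2 -> edge_word F (lpow x m).
Proof. by move=> H; case: m => k; apply: edge_word_nseq. Qed.

Lemma Area_le_nil : Area_le F [::] 0.
Proof. by exists 0; split=> //; exists [::]; split=> //; split=> //; apply: rst_refl. Qed.

Lemma Area_le_leq w m m' : Area_le F w m -> m <= m' -> Area_le F w m'.
Proof. by move=> [k [Hk H]] Hm; exists k; split=> //; exact: leq_trans Hk Hm. Qed.

Lemma Area_le_freely_equal w w' m :
  freely_equal w w' -> Area_le F w' m -> Area_le F w m.
Proof.
move=> Hww' [k [Hk [xs [Hs [Hx Hf]]]]]; exists k; split=> //.
by exists xs; split=> //; split=> //; apply: rst_trans Hf.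
Qed.

Lemma Area_le_ins u r v m : edge_word F u -> relator_pm F r ->
  Area_le F (u ++ v) m -> Area_le F (u ++ r ++ v) m.+1.
Proof.
move=> Hu Hr [k [Hk [xs [Hs [Hx Hf]]]]]; exists k.+1; split=> //.
exists ((u, r) :: xs); split; first by rewrite /= Hs.
split; first by move=> p; rewrite inE => /orP[/eqP->|/Hx].
rewrite /= -!catA; do 2! apply: freely_equal_catl.
apply: rst_trans (freely_equal_catl _ Hf).
by apply: rst_sym; apply: freely_equal_winvKl.
Qed.

Lemma Area_le_del u r v m : edge_word F u -> relator_pm F r ->
  Area_le F (u ++ r ++ v) m -> Area_le F (u ++ v) m.+1.
Proof.
move=> Hu Hr H.
apply: (@Area_le_freely_equal _ (u ++ winv r ++ r ++ v)).
  by apply: freely_equal_catl; apply: rst_sym; apply: freely_equal_winvKl.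
by apply: Area_le_ins => //; apply: relator_pm_winv.
Qed.

Lemma Area_le_nseq_pair (a c : letter V) k u X m :
  adj F a.1.1 a.1.2 -> relator_pm F [:: a; c] -> edge_word F u ->
  Area_le F (u ++ X) m -> Area_le F (u ++ nseq k a ++ nseq k c ++ X) (m + k).
Proof.
move=> Ha Hr Hu H; elim: k => [|k IH]; first by rewrite addn0.
rewrite nseqSr addnS -catA /= catA.
apply: (@Area_le_ins _ [:: a; c]) => //; first by rewrite edge_word_cat Hu edge_word_nseq.
by rewrite -catA.
Qed.

Lemma Area_le_lpow_reverse (x : V * V) (n : int) u X m :
  adj F x.1 x.2 -> edge_word F u -> Area_le F (u ++ X) m ->
  Area_le F (u ++ lpow x n ++ lpow (reverse_edge x) n ++ X) (m + `|n|%N).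
Proof.
move=> Hx Hu H; case: n => k /=; apply: Area_le_nseq_pair => //.
  by left; left; exists x.
right; left; exists (reverse_edge x); split; last by case: x {Hx}.
by case: x Hx => a b; rewrite /adj /= eq_sym setUC.
Qed.

Section Cycle.
Variables (e f g : V * V) (b : bool).
Hypothesis Hcyc : comb_1cycle3 F e f g.

Let adj_cycle : [/\ adj F e.1 e.2, adj F f.1 f.2 & adj F g.1 g.2].
Proof. by case: Hcyc. Qed.

Lemma relator_pm_cycle : relator_pm F [:: (e, b); (f, b); (g, b)].
Proof. by left; right; exists e, f, g; split=> //; case: b; [left|right]. Qed.

(* [f e g] is the inverse of the relator [g^-1 e^-1 f^-1] of the 1-cycle [g e f]. *)
Lemma relator_pm_cycle_swap : relator_pm F [:: (f, b); (e, b); (g, b)].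
Proof.
right; right; exists g, e, f; split; last by case: b; [right|left].
by case: Hcyc => -[? ? ?] [? ? ?]; split; split.
Qed.

(* [e f = (e f g) g^-1], and trading the relator [e f g] for [f e g] costs two. *)
Lemma Area_le_swap u X m : edge_word F u ->
  Area_le F (u ++ (f, b) :: (e, b) :: X) m ->
  Area_le F (u ++ (e, b) :: (f, b) :: X) m.+2.
Proof.
move=> Hu H.
apply: (@Area_le_freely_equal _ (u ++ [:: (e, b); (f, b); (g, b)] ++ linv (g, b) :: X)).
  have := freely_equal_inverse_letter (u ++ [:: (e, b); (f, b)]) (g, b) X.
  by rewrite -!catA /=; apply.
apply: Area_le_ins relator_pm_cycle _ => //.
apply: Area_le_del relator_pm_cycle_swap _ => //.
apply: Area_le_freely_equal H.
apply: rst_sym; have := freely_equal_inverse_letter (u ++ [:: (f, b); (e, b)]) (g, b) X.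
by rewrite -!catA /=; apply.
Qed.

Lemma Area_le_move j u Y m : edge_word F u ->
  Area_le F (u ++ nseq j (f, b) ++ (e, b) :: Y) m ->
  Area_le F (u ++ (e, b) :: nseq j (f, b) ++ Y) (m + 2 * j).
Proof.
elim: j u m => [|j IH] u m Hu H; first by rewrite addn0.
have [_ Hf _] := adj_cycle.
have Huf : edge_word F (u ++ [:: (f, b)]) by rewrite edge_word_cat Hu /edge_word /= Hf.
have := IH _ m Huf; rewrite -!catA => /(_ H) /(Area_le_swap Hu) H'.
by apply: Area_le_leq H' _; lia.
Qed.

Lemma Area_le_cycle_powers k u X m : edge_word F u -> Area_le F (u ++ X) m ->
  Area_le F (u ++ nseq k (e, b) ++ nseq k (f, b) ++ nseq k (g, b) ++ X)
    (m + (k * k + 2 * k)).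
Proof.
move=> Hu H; elim: k => [|k IH]; first by rewrite addn0.
have [He Hf _] := adj_cycle.
have Hue : edge_word F (u ++ nseq k (e, b)) by rewrite edge_word_cat Hu edge_word_nseq.
have Huef : edge_word F ((u ++ nseq k (e, b)) ++ nseq k (f, b))
  by rewrite edge_word_cat Hue edge_word_nseq.
have Hins := Area_le_ins (v := nseq k (g, b) ++ X) Huef relator_pm_cycle_swap.
rewrite -!catA in Hins; have {IH}Hins := Hins _ IH.
have Hmove := Area_le_move (j := k.+1) (Y := (g, b) :: nseq k (g, b) ++ X) Hue.
rewrite nseqSr -!catA /= in Hmove; have {Hins}Hmove := Hmove _ Hins.
rewrite [nseq k.+1 (e, b)]nseqSr [nseq k.+1 (f, b)]nseqSr -!catA /=.
by apply: Area_le_leq Hmove _; lia.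
Qed.

End Cycle.

Section TreeWords.
Variable T : rel V.
Hypothesis T_adj : forall u v, T u v -> adj F u v.
Variable n : int.

Definition path_word (x : V) (s : seq V) : word V :=
  flatten [seq lpow ep n | ep <- zip (x :: s) s].

Lemma path_word_cons x y s : path_word x (y :: s) = lpow (x, y) n ++ path_word y s.
Proof. by []. Qed.

Lemma path_word_rcons z t x :
  path_word z (rcons t x) = path_word z t ++ lpow (last z t, x) n.
Proof.
have zipE y : zip (y :: rcons t x) (rcons t x) = rcons (zip (y :: t) t) (last y t, x).
  by elim: t y {z} => [|y' t IH] y //=; rewrite IH.
by rewrite /path_word zipE map_rcons flatten_rcons.
Qed.

Lemma last_rev_belast (y : V) s : last (last y s) (rev (belast y s)) = y.
Proof. by case: s => [|z s] //=; rewrite rev_cons last_rcons. Qed.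

Lemma edge_word_path_word x s : path T x s -> edge_word F (path_word x s).
Proof.
elim: s x => [|y s IH] x //= /andP[Hxy Hp].
by rewrite path_word_cons edge_word_cat edge_word_lpow ?IH //; apply: T_adj.
Qed.

Lemma Area_le_path_word_rev x s u X m :
  path T x s -> edge_word F u -> Area_le F (u ++ X) m ->
  Area_le F (u ++ path_word x s ++ path_word (last x s) (rev (belast x s)) ++ X)
    (m + size s * `|n|%N).
Proof.
elim: s x u X m => [|y s IH] x u X m /=; first by rewrite addn0.
move=> /andP[Hxy Hp] Hu H.
rewrite rev_cons path_word_rcons last_rev_belast path_word_cons.
have Hu' : edge_word F (u ++ lpow (x, y) n) by rewrite edge_word_cat Hu edge_word_lpow ?T_adj.
have := IH y _ (lpow (reverse_edge (x, y)) n ++ X) _ Hp Hu'.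
rewrite -!catA => /(_ _ (Area_le_lpow_reverse (x := (x, y)) n (T_adj Hxy) Hu H)) H'.
by apply: Area_le_leq H' _; rewrite mulSn; lia.
Qed.

End TreeWords.

Section Geodesics.
Variables (T : rel V) (gp : V -> V -> seq V).
Hypotheses (HT : spanning_tree F T) (Hgp : geodesic_paths T gp).

Lemma geodesic_uniq x y : uniq (x :: gp x y).
Proof.
have [Hp [Hl Hmin]] := Hgp x y.
move: Hl; case: (shortenP Hp) => p' Hp' Hu' Hsub /(Hmin p' Hp') Hle.
apply: (leq_size_uniq Hu'); last by rewrite /= ltnS.
by move=> z; rewrite !inE => /orP[->//|/Hsub ->]; rewrite orbT.
Qed.

(* Simple tree paths are unique, so the geodesic back is the reversed one. *)
Lemma geodesic_rev x y : gp y x = rev (belast x (gp x y)).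
Proof.
have [Tsym [_ Huniq]] := HT; have [Hp' [Hl' _]] := Hgp y x.
have [s0 [_ Hs0]] := Huniq y x.
move: (Hgp x y) (geodesic_uniq x y); set s := gp x y => -[Hp [Hl _]] Hxy.
rewrite -(Hs0 (gp y x)); last by split=> //; split=> //; apply: geodesic_uniq.
apply: Hs0; split; last split.
- by rewrite -Hl rev_path; apply: sub_path Hp => u v; rewrite Tsym.
- by rewrite -Hl last_rev_belast.
- by rewrite -Hl -rev_rcons -lastI rev_uniq.
Qed.

Lemma size_geodesic_le_treeL x y : size (gp x y) <= treeL gp.
Proof.
apply: leq_trans (@leq_bigmax V (fun v => size (gp x v)) y) _.
exact: (@leq_bigmax V (fun u => \max_(v : V) size (gp u v)) x).
Qed.

Lemma pnE n x y : pn gp n x y = path_word n x (gp x y).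
Proof. by []. Qed.

Lemma edge_word_pn n x y : edge_word F (pn gp n x y).
Proof. by have [_ [T_adj _]] := HT; apply: (edge_word_path_word T_adj); case: (Hgp x y). Qed.

Lemma Area_le_pn_rev n x y u X m : edge_word F u -> Area_le F (u ++ X) m ->
  Area_le F (u ++ pn gp n x y ++ pn gp n y x ++ X) (m + treeL gp * `|n|%N).
Proof.
move=> Hu H; have [_ [T_adj _]] := HT; have [Hp [Hl _]] := Hgp x y.
have := Area_le_path_word_rev T_adj n Hp Hu H.
rewrite Hl -pnE -geodesic_rev => H'; apply: Area_le_leq H' _.
by rewrite leq_add2l leq_mul2r size_geodesic_le_treeL orbT.
Qed.

End Geodesics.

End Area.

Theorem lemma4p4 (V : finType) (F : {set {set V}})
  (HF : is_simplicial_complex F) (Hflag : is_flag F)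
  (Hsc : simply_connected F)
  (q : V) (T : rel V) (HT : spanning_tree F T)
  (gp : V -> V -> seq V) (Hgp : geodesic_paths T gp)
  (e f g : V * V) (Hcyc : comb_1cycle3 F e f g) (n : int) :
  Area_le F (Phi gp q n [:: (e, true); (f, true); (g, true)])
    (3 * `|n|%N ^ 2 + (3 * treeL gp + 6) * `|n|%N + 3).
Proof.
move: Hcyc; case: e f g => [a b] [b' c] [c' a'] Hcyc.
have [[Hab Hbc Hca] [/= Eb Ec Ea]] := Hcyc; subst b' c' a'.
have Hpn := edge_word_pn HT Hgp n; have Hpow x := @edge_word_lpow V F x (n + 1).
rewrite /Phi /= /Phi_letter /= /Phi_edge /= cats0 -!catA.
set E := lpow (a, b) (n + 1); set G := lpow (c, a) (n + 1).
have Hqa := Area_le_pn_rev HT Hgp n q a (u := [::]) (X := [::]) isT (Area_le_nil F).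
rewrite /= cats0 add0n in Hqa.
have Habc := Area_le_cycle_powers (0 <= n + 1)%R Hcyc `|(n + 1)%R|%N (Hpn q a) Hqa.
rewrite -!lpowE in Habc.
have Hb := Area_le_pn_rev HT Hgp n b q (u := pn gp n q a ++ E)
  (X := lpow (b, c) (n + 1) ++ G ++ pn gp n a q).
rewrite -!catA in Hb; have {Habc}Hb := Hb _ ltac:(by rewrite edge_word_cat Hpn Hpow) Habc.
have Hc := Area_le_pn_rev HT Hgp n c q (X := G ++ pn gp n a q)
  (u := pn gp n q a ++ E ++ pn gp n b q ++ pn gp n q b ++ lpow (b, c) (n + 1)).
rewrite -!catA in Hc; have {Hb}Hc := Hc _ ltac:(by rewrite !edge_word_cat !Hpn !Hpow) Hb.
apply: Area_le_leq Hc _.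
have Hk : `|(n + 1)%R|%N <= `|n|%N + 1 by lia.
by nia.
Qed.
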